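(* Let $\mathcal A=(Q,\Sigma,\delta,\rho)$ be a connected bireversible Mealy automaton whose labeled orbit tree $\mathfrak t(\mathcal A)$ has no active self-liftable branch, and let $\mathfrak j=\mathfrak j(\mathbf e)$ be a jungle tree whose trunk $\mathbf e$ has length $n$ and edge labels $k_1,\dots,k_n$ (from the root down). Then for every $i\in\{0,\dots,n\}$ and every $\mathbf u\in Q^i$ which is a prefix of some stem, the number of stems of $\mathfrak j$ with prefix $\mathbf u$ equals $k_{i+1}k_{i+2}\cdots k_n$ (in particular it depends only on $i$).
   Context: Mealy automata. A Mealy automaton is $\mathcal A=(Q,\Sigma,\delta,\rho)$ with $Q,\Sigma$ finite non-empty sets, $\delta=(\delta_i\colon Q\to Q)_{i\in\Sigma}$, $\rho=(\rho_x\colon\Sigma\to\Sigma)_{x\in Q}$; transitions $x\xrightarrow{i\mid\rho_x(i)}\delta_i(x)$. Invertible: each $\rho_x$ a permutation of $\Sigma$; reversible: each $\delta_i$ a permutation of $Q$; bireversible: invertible, reversible, and for each $j\in\Sigma$ the map $x\mapsto\delta_{\rho_x^{-1}(j)}(x)$ is a permutation of $Q$. Connected: the directed graph on $Q$ with edges $x\to\delta_i(x)$ is connected. Extensions: $\rho_x(i\mathbf s)=\rho_x(i)\rho_{\delta_i(x)}(\mathbf s)$; $\rho_{x_1\cdots x_m}=\rho_{x_m}\circ\cdots\circ\rho_{x_1}$; $\delta_i(x\mathbf u)=\delta_i(x)\delta_{\rho_x(i)}(\mathbf u)$ on $Q^*$, $\delta_{i_1\cdots i_m}=\delta_{i_m}\circ\cdots\circ\delta_{i_1}$.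 The connected components of $\mathcal A^n$ (stateset $Q^n$, transitions $\mathbf u\xrightarrow{i\mid\rho_{\mathbf u}(i)}\delta_i(\mathbf u)$) are, for reversible $\mathcal A$, the orbits of $Q^n$ under the maps $\delta_{\mathbf s}$. Orbit tree $\mathfrak t(\mathcal A)$: vertices at level $n\ge0$ are the connected components of $\mathcal A^n$; an edge from the component of $\mathbf u\in Q^n$ to that of $\mathbf ux$ for all $\mathbf u,x$; edge $C\to D$ labeled $\#D/\#C$. $\top,\bot$ = first/last vertex of a downward path; level of an edge/path = level of its top vertex. A word of $Q^*\cup Q^\omega$ represents the initial path through the components of its prefixes. Edge $e$ is liftable to $f$ if every word of $\bot(e)$ has a suffix in $\bot(f)$; paths are liftable if corresponding edges are. $f$ is a legitimate child of $e$ if $\top(f)=\bot(e)$ and $f$ is liftable to $e$. A path/subtree $\mathfrak s$ is $k$-self-liftable if for all $i\ge0$ every path in $\mathfrak s$ starting at level $i+k$ is liftable to a path in $\mathfrak s$ starting at level $i$; self-liftable if $k$-self-liftable for some $k>0$. A branch (infinite initial path) is active if its labels are not eventually all $1$. Jungle trees: for a finite 1-self-liftable initial path $\mathbf e$ of length $n$ whose last edge has at least two legitimate children, all labeled $1$, $\mathfrak j(\mathbf e)$ consists of $\mathbf e$ (the trunk) plus all edges descending from $\bot(\mathbf e)$ that are liftable to the last edge of $\mathbf e$. Stems: the words of $\bot(\mathbf e)\subseteq Q^n$. *)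

From HB Require Import structures.
From mathcomp Require Import all_boot all_algebra.
From mathcomp Require Import boolp.
From Stdlib Require Import Relations.
Set Implicit Arguments. Unset Strict Implicit. Unset Printing Implicit Defensive.
Import GRing.Theory Num.Theory.

(* A Mealy automaton (Q, S, delta, rho): delta i : Q -> Q for i : S,
   rho x : S -> S for x : Q; transition x --i|rho x i--> delta i x. *)
Section Mealy.
Variables (Q S : finType) (delta : S -> Q -> Q) (rho : Q -> S -> S).

Definition invertible := forall x : Q, bijective (rho x).
Definition reversible := forall i : S, bijective (delta i).
(* inverse of rho x (meaningful when rho x is a permutation) *)
Definition rhoinv (x : Q) (j : S) : S := odflt j [pick i | rho x i == j].
Definition bireversible :=
  [/\ invertible, reversible &
      forall j : S, bijective (fun x : Q => delta (rhoinv x j) x)].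

Definition qstep (x y : Q) : Prop := exists i : S, delta i x = y.
Definition connected := forall x y : Q, clos_refl_sym_trans Q qstep x y.

Fixpoint deltaw (i : S) (u : seq Q) : seq Q :=
  if u is x :: u' then delta i x :: deltaw (rho x i) u' else [::].

Definition wstep (u v : seq Q) : Prop := exists i : S, deltaw i u = v.
(* v lies in the connected component of u (in A^(size u)) *)
Definition wcomp (u v : seq Q) : Prop := clos_refl_sym_trans (seq Q) wstep u v.

Definition ccard (u : seq Q) : nat :=
  #|[set t : (size u).-tuple Q | `[< wcomp u (val t) >]]|.

(* A vertex at level n is a component of A^n, represented by
   any of its words.  Every edge at level n goes from the component of
   (take n w) to the component of w, for a word w of length n+1; we
   represent the edge by w (two words represent the same edge iff they
   are in the same component).  bot(w) = wcomp w, top(w) = wcomp (take n w). *)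
Definition etop (w : seq Q) : seq Q := take (size w).-1 w.

Definition label (w : seq Q) : rat := ((ccard w)%:R / (ccard (etop w))%:R)%R.

Definition liftable (w w' : seq Q) : Prop :=
  forall v, wcomp w v -> exists k, wcomp w' (drop k v).

(* A set of edges (subtree / path) is a predicate E on representatives. *)
Definition path_in (E : seq Q -> Prop) (i r : nat) (p : nat -> seq Q) : Prop :=
  (forall t, t < r -> size (p t) = (i + t).+1 /\ E (p t)) /\
  (forall t, t.+1 < r -> wcomp (p t) (etop (p t.+1))).

Definition path_liftable (r : nat) (p p' : nat -> seq Q) : Prop :=
  forall t, t < r -> liftable (p t) (p' t).

Definition self_liftable_k (E : seq Q -> Prop) (k : nat) : Prop :=
  forall i r p, path_in E (i + k) r p ->
    exists p', path_in E i r p' /\ path_liftable r p p'.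

Definition self_liftable (E : seq Q -> Prop) : Prop :=
  exists k, 0 < k /\ self_liftable_k E k.

(* A branch (infinite initial path) given by representatives b j of its
   vertex at level j. *)
Definition branch (b : nat -> seq Q) : Prop :=
  forall j, size (b j) = j /\ wcomp (b j) (take j (b j.+1)).

Definition branch_edges (b : nat -> seq Q) (w : seq Q) : Prop :=
  exists j, wcomp (b j.+1) w.

Definition active (b : nat -> seq Q) : Prop :=
  ~ (exists N, forall j, N <= j -> label (b j.+1) = 1%R).

(* A finite initial path of length n, represented (as in the paper) by a
   word w0 of Q^n: the path through the components of its prefixes.
   Its edge at level t < n is represented by take t.+1 w0. *)
Definition ipath_edges (w0 : seq Q) (w : seq Q) : Prop :=
  exists t, t < size w0 /\ wcomp (take t.+1 w0) w.

Definition legit_child (e f : seq Q) : Prop :=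
  size f = (size e).+1 /\ wcomp e (etop f) /\ liftable f e.

Definition jungle_trunk (w0 : seq Q) : Prop :=
  [/\ 0 < size w0,
      self_liftable_k (ipath_edges w0) 1,
      (exists f1 f2, legit_child w0 f1 /\ legit_child w0 f2 /\ ~ wcomp f1 f2) &
      (forall f, legit_child w0 f -> label f = 1%R)].

(* stems of the jungle tree: words of bot(e) = wcomp w0 *)
Definition stems_with_prefix (w0 u : seq Q) : nat :=
  #|[set t : (size w0).-tuple Q | `[< wcomp w0 (val t) /\ take (size u) (val t) = u >]]|.

End Mealy.

(* Each δ_s is injective on words of a reversible automaton and sends the
   stems with prefix u to stems with prefix δ_s(u); so along the orbit of u
   under the permutation δ_s of Q^i the number of such stems cannot decrease,
   hence it is constant on the components of A^i.  Sorting the component of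
   the trunk word w by prefixes of length i then gives
   #comp(w) = #comp(w[..i]) * #(stems with prefix u), and the labels of the
   trunk below level i telescope to #comp(w) / #comp(w[..i]). *)
From Pilot Require Import Defs.
From HB Require Import structures.
From mathcomp Require Import all_boot all_algebra.
From mathcomp Require Import boolp.
From Stdlib Require Import Relations.
Set Implicit Arguments. Unset Strict Implicit. Unset Printing Implicit Defensive.
Import GRing.Theory Num.Theory.

Lemma inj_nondecreasing_eq (T : finType) (f : T -> T) (g : T -> nat) :
  injective f -> (forall x, (g x <= g (f x))%N) -> forall x, g (f x) = g x.
Proof.
move=> f_inj g_le x; apply/eqP; rewrite eqn_leq g_le andbT.
have g_iter k y : (g y <= g (iter k f y))%N.
  by elim: k => [|k IHk] //=; apply: leq_trans IHk (g_le _).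
by have := g_iter (fingraph.order f x).-1 (f x); rewrite -iterSr orderSpred iter_order.
Qed.

Section MealyWords.
Variables (Q S : finType) (delta : S -> Q -> Q) (rho : Q -> S -> S).

Local Notation deltaw := (deltaw delta rho).
Local Notation wcomp := (wcomp delta rho).
Local Notation ccard := (ccard delta rho).
Local Notation stems_with_prefix := (stems_with_prefix delta rho).

Lemma size_deltaw s u : size (deltaw s u) = size u.
Proof. by elim: u s => [|x u IHu] s //=; rewrite IHu. Qed.

Lemma take_deltaw k s u : take k (deltaw s u) = deltaw s (take k u).
Proof. by elim: u k s => [|x u IHu] [|k] s //=; rewrite IHu. Qed.

Lemma wcomp_take k u v : wcomp u v -> wcomp (take k u) (take k v).
Proof.
elim=> [x y [s <-]|x|x y _|x y z _ Hxy _ Hyz].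
- by apply: rst_step; exists s; rewrite take_deltaw.
- exact: rst_refl.
- exact: rst_sym.
- exact: rst_trans Hxy Hyz.
Qed.

Lemma ccard_gt0 u : (0 < ccard u)%N.
Proof. by apply/card_gt0P; exists (in_tuple u); rewrite inE; apply/asboolP/rst_refl. Qed.

Lemma stems_with_prefix_eq0 w u :
  ~ wcomp (take (size u) w) u -> stems_with_prefix w u = 0%N.
Proof.
move=> u_out; apply/eqP; rewrite cards_eq0; apply/eqP/setP => t; rewrite !inE.
by apply/negbTE/asboolP => -[wt tu]; apply: u_out; rewrite -{2}tu; apply: wcomp_take.
Qed.

Definition prefix_tuple {w : seq Q} i (t : (size w).-tuple Q) : (size (take i w)).-tuple Q :=
  tcast (esym (size_take_min i w)) [tuple of take i t].

Lemma card_component_prefix w i (p : (size (take i w)).-tuple Q) :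
  (i <= size w)%N ->
  #|[set t | `[< wcomp w (val t) >] & prefix_tuple i t == p]| =
  stems_with_prefix w p.
Proof.
move=> le_i; apply: eq_card => t.
rewrite !inE -val_eqE /prefix_tuple /= val_tcast /= size_tuple.
have -> : take (size (take i w)) t = take i t by rewrite size_takel.
by apply/andP/asboolP => -[wt /eqP tp]; split=> //; apply/asboolP.
Qed.

Section Reversible.
Hypothesis delta_rev : reversible delta.

Lemma deltaw_inj s u v :
  size u = size v -> deltaw s u = deltaw s v -> u = v.
Proof.
elim: u v s => [|x u IHu] [|y v] s //= [sz_uv] [exy euv].
have [g deltaK _] := delta_rev s.
have {}exy : x = y by rewrite -(deltaK x) -(deltaK y) exy.
by subst y; rewrite (IHu _ _ sz_uv euv).
Qed.

Definition deltaw_tuple n s (t : n.-tuple Q) : n.-tuple Q :=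
  @Tuple n Q (deltaw s t) (introT eqP (etrans (size_deltaw s t) (size_tuple t))).

Lemma deltaw_tuple_inj n s : injective (@deltaw_tuple n s).
Proof.
by move=> t t' /(congr1 val) /deltaw_inj e; apply/val_inj/e; rewrite !size_tuple.
Qed.

Lemma stems_with_prefix_le_deltaw w s u :
  (stems_with_prefix w u <= stems_with_prefix w (deltaw s u))%N.
Proof.
rewrite /Defs.stems_with_prefix -(card_imset _ (@deltaw_tuple_inj _ s)).
apply: subset_leq_card.
apply/subsetP => _ /imsetP [t + ->]; rewrite inE => /asboolP [wt ut].
rewrite inE; apply/asboolP; split; last by rewrite /= size_deltaw take_deltaw ut.
by apply: rst_trans wt _; apply: rst_step; exists s.
Qed.

Lemma stems_with_prefix_deltaw w s u :
  stems_with_prefix w (deltaw s u) = stems_with_prefix w u.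
Proof.
apply: (@inj_nondecreasing_eq _ (@deltaw_tuple (size u) s)
  (fun t => stems_with_prefix w (val t)) (@deltaw_tuple_inj _ s) _ (in_tuple u)).
by move=> t; apply: stems_with_prefix_le_deltaw.
Qed.

Lemma eq_stems_with_prefix w u v :
  wcomp u v -> stems_with_prefix w u = stems_with_prefix w v.
Proof.
by elim=> // [x y [s <-]|x y z _ -> _ ->] //; rewrite stems_with_prefix_deltaw.
Qed.

Lemma ccard_prefix_mul w i u : (i <= size w)%N -> wcomp (take i w) u ->
  ccard w = (ccard (take i w) * stems_with_prefix w u)%N.
Proof.
move=> le_i wu; rewrite /Defs.ccard -sum1dep_card (partition_big (prefix_tuple i) predT) //=.
under eq_bigr => p _ do rewrite sum1dep_card card_component_prefix //.
rewrite (eq_bigr (fun p => if `[< wcomp (take i w) (val p) >]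
                           then stems_with_prefix w u else 0%N)); last first.
  move=> p _; case: asboolP => [wp|wp]; last first.
    apply: stems_with_prefix_eq0.
    by have -> : take (size (val p)) w = take i w by rewrite size_tuple size_takel.
  by apply: eq_stems_with_prefix; apply: rst_trans (rst_sym _ _ _ _ wp) wu.
by rewrite -big_mkcond sum_nat_cond_const mulnC.
Qed.

End Reversible.
End MealyWords.

Local Open Scope ring_scope.

Theorem lemma5p12 (Q S : finType) (delta : S -> Q -> Q) (rho : Q -> S -> S)
  (hQ : (0 < #|Q|)%N) (hS : (0 < #|S|)%N)
  (hconn : connected delta)
  (hbirev : bireversible delta rho)
  (hnoact : forall b : nat -> seq Q, branch delta rho b -> active delta rho b ->
     ~ self_liftable delta rho (branch_edges delta rho b))
  (w0 : seq Q) (hjungle : jungle_trunk delta rho w0) :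
  forall (i : nat) (u : seq Q), (i <= size w0)%N -> size u = i ->
    (exists v, wcomp delta rho w0 v /\ take i v = u) ->
    (stems_with_prefix delta rho w0 u)%:R
      = \prod_(i <= t < size w0) label delta rho (take t.+1 w0) :> rat.
Proof.
move=> i u le_i _ [v [w0v <-]].
have [_ delta_rev _] := hbirev.
pose c t : rat := (ccard delta rho (take t w0))%:R.
have c_neq0 t : c t != 0 by rewrite pnatr_eq0 -lt0n ccard_gt0.
have countE : c (size w0) = c i * (stems_with_prefix delta rho w0 (take i v))%:R.
  rewrite /c take_size -natrM.
  by rewrite (ccard_prefix_mul (rho := rho) delta_rev le_i (wcomp_take i w0v)).
have [ei|lt_i] := eqVneq i (size w0).
  by subst i; apply: (mulfI (c_neq0 (size w0))); rewrite -countE big_geq // mulr1.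
rewrite (telescope_prodf_eq c) //.
- by rewrite countE mulrC mulKf.
- by rewrite ltn_neqAle lt_i le_i.
- by move=> t /andP[_ lt_t]; rewrite /label /etop size_takel //= take_takel.
Qed.
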